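(* Let $\Gamma$ be a finitely generated group acting by permutations on a countable set $X$, and $w:X\to(0,\infty)$ balanced. If there exists a $w$-compression system, then there is no $w$-invariant mean on $X$.
   Context: $w$ is balanced: for every $g\in\Gamma$, $x\mapsto w(gx)/w(x)$ is bounded on $X$. A $w$-compression system is a finite set $T\subset\Gamma$ together with bounded nonnegative functions $\Psi_g:X\to\mathbb{R}$ ($g\in T$) such that for every $x\in X$: $\sum_{g\in T}\Psi_g(x)=1$ and $\sum_{g\in T}\Psi_g(g^{-1}x)\frac{w(g^{-1}x)}{w(x)}<\frac12$. A mean on $X$ is a finitely additive probability measure on all subsets of $X$ (extended to $\ell^\infty(X)$); it is $w$-invariant if $\mu(gA)=\int_A\frac{w(gx)}{w(x)}\,d\mu(x)$ for all $g\in\Gamma$, $A\subseteq X$. *)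

From Stdlib Require Import Reals List ClassicalEpsilon.
Open Scope R_scope.

Section Defs.
Context {G X : Type}.

Definition is_group (mul : G -> G -> G) (inv : G -> G) (e : G) : Prop :=
  (forall a b c, mul a (mul b c) = mul (mul a b) c) /\
  (forall a, mul e a = a) /\ (forall a, mul a e = a) /\
  (forall a, mul (inv a) a = e) /\ (forall a, mul a (inv a) = e).

Inductive generated (mul : G -> G -> G) (inv : G -> G) (e : G) (S : list G)
  : G -> Prop :=
| gen_e : generated mul inv e S e
| gen_s : forall s, In s S -> generated mul inv e S s
| gen_mul : forall a b, generated mul inv e S a -> generated mul inv e S b ->
    generated mul inv e S (mul a b)
| gen_inv : forall a, generated mul inv e S a -> generated mul inv e S (inv a).

Definition finitely_generated (mul : G -> G -> G) (inv : G -> G) (e : G) : Prop :=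
  exists S : list G, forall g, generated mul inv e S g.

(* left action of G on X (each act g is then a permutation of X) *)
Definition is_action (mul : G -> G -> G) (e : G) (act : G -> X -> X) : Prop :=
  (forall x, act e x = x) /\
  (forall g h x, act (mul g h) x = act g (act h x)).

Definition countable_type (T : Type) : Prop :=
  exists f : T -> nat, forall a b, f a = f b -> a = b.

Definition bounded (f : X -> R) : Prop := exists M, forall x, Rabs (f x) <= M.

Definition balanced (act : G -> X -> X) (w : X -> R) : Prop :=
  forall g, bounded (fun x => w (act g x) / w x).

Definition sum_list (T : list G) (f : G -> R) : R :=
  fold_right (fun g acc => f g + acc) 0 T.

Definition compression_system (inv : G -> G) (act : G -> X -> X) (w : X -> R)
  (T : list G) (Psi : G -> X -> R) : Prop :=
  NoDup T /\
  (forall g, In g T -> bounded (Psi g) /\ (forall x, 0 <= Psi g x)) /\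
  (forall x,
     sum_list T (fun g => Psi g x) = 1 /\
     sum_list T (fun g => Psi g (act (inv g) x) * (w (act (inv g) x) / w x)) < 1/2).

Definition has_compression_system (inv : G -> G) (act : G -> X -> X)
  (w : X -> R) : Prop :=
  exists (T : list G) (Psi : G -> X -> R), compression_system inv act w T Psi.

Definition indicator (A : X -> Prop) (x : X) : R :=
  if excluded_middle_informative (A x) then 1 else 0.

Definition image_set (act : G -> X -> X) (g : G) (A : X -> Prop) : X -> Prop :=
  fun y => exists x, A x /\ y = act g x.

(* A mean on X, presented as its (unique) extension to l^infty(X): a positive,
   normalized linear functional on bounded functions.  mu(A) = m (indicator A),
   int_A f dmu = m (indicator A * f). *)
Definition is_mean (m : (X -> R) -> R) : Prop :=
  (forall f g, bounded f -> bounded g -> m (fun x => f x + g x) = m f + m g) /\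
  (forall c f, bounded f -> m (fun x => c * f x) = c * m f) /\
  (forall f, bounded f -> (forall x, 0 <= f x) -> 0 <= m f) /\
  m (fun _ => 1) = 1.

Definition w_invariant (act : G -> X -> X) (w : X -> R) (m : (X -> R) -> R) : Prop :=
  forall (g : G) (A : X -> Prop),
    m (indicator (image_set act g A)) =
    m (fun x => indicator A x * (w (act g x) / w x)).

End Defs.

From Pilot Require Import Defs.
From Stdlib Require Import Reals List ClassicalEpsilon Lra FunctionalExtensionality.
Open Scope R_scope.
(* Re-import Defs so that its [bounded] shadows the one from the Reals library. *)
Import Pilot.Defs.

(* Let m be a w-invariant mean and write rho_g(x) = w(g^-1 x)/w(x).
   Invariance says m(1_A o g) = m(1_A * rho_g) for every set A (apply it to g^-1
   and note 1_{g^-1 A} = 1_A o g).  We call this identity "f transfers along g"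
   and extend it from indicators to every bounded f: transfer is preserved by
   linear combinations, hence holds for staircase functions, and it passes to
   uniform limits because m is a positive normalized functional and rho_g is
   bounded; every bounded function is a uniform limit of shifted staircases.
   Applied to f = Psi_g o g^-1 this gives m(Psi_g) = m(Psi_g(g^-1 .) rho_g), so
     1 = m(sum_g Psi_g) = m(sum_g Psi_g(g^-1 .) rho_g) <= 1/2,
   a contradiction. *)

Lemma Rabs_le_between (a b : R) : Rabs a <= b -> - b <= a <= b.
Proof. unfold Rabs; destruct Rcase_abs; lra. Qed.

Lemma Rabs_eq0_of_small (a c : R) :
  0 < c -> (forall d, 0 < d -> Rabs a <= d * c) -> a = 0.
Proof.
  intros Hc Hsmall.
  assert (Hle : Rabs a <= 0).
  { apply le_epsilon; intros eps Heps.
    specialize (Hsmall (eps / c) ltac:(apply Rdiv_lt_0_compat; lra)).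
    replace (eps / c * c) with eps in Hsmall by (field; lra). lra. }
  pose proof (Rabs_pos a).
  destruct (Req_dec a 0) as [|Ha]; [assumption|].
  pose proof (Rabs_pos_lt a Ha); lra.
Qed.

Lemma sum_list_ext {I : Type} (T : list I) (a b : I -> R) :
  (forall i, In i T -> a i = b i) -> sum_list T a = sum_list T b.
Proof.
  induction T as [|i T IH]; intro Hab; simpl; [reflexivity |].
  rewrite Hab, IH; [reflexivity | | left; reflexivity].
  intros j Hj; apply Hab; right; exact Hj.
Qed.

Section Bounded.
Context {X : Type}.

Lemma bounded_const (c : R) : @bounded X (fun _ => c).
Proof. exists (Rabs c); intros; lra. Qed.

Lemma bounded_add (f h : X -> R) :
  bounded f -> bounded h -> bounded (fun x => f x + h x).
Proof.
  intros [M HM] [N HN]; exists (M + N); intro x.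
  eapply Rle_trans; [apply Rabs_triang|]. specialize (HM x); specialize (HN x); lra.
Qed.

Lemma bounded_mul (f h : X -> R) :
  bounded f -> bounded h -> bounded (fun x => f x * h x).
Proof.
  intros [M HM] [N HN]; exists (M * N); intro x. rewrite Rabs_mult.
  apply Rmult_le_compat; try apply Rabs_pos; auto.
Qed.

Lemma bounded_scale (c : R) (f : X -> R) : bounded f -> bounded (fun x => c * f x).
Proof. intro Hf; apply bounded_mul; [apply bounded_const | exact Hf]. Qed.

Lemma bounded_indicator (A : X -> Prop) : bounded (indicator A).
Proof.
  exists 1; intro x; unfold indicator; destruct excluded_middle_informative;
  rewrite ?Rabs_R1, ?Rabs_R0; lra.
Qed.

Lemma bounded_comp {Y : Type} (f : X -> R) (phi : Y -> X) :
  bounded f -> bounded (fun y => f (phi y)).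
Proof. intros [M HM]; exists M; auto. Qed.

Lemma bounded_sum_list {I : Type} (T : list I) (F : I -> X -> R) :
  (forall i, In i T -> bounded (F i)) -> bounded (fun x => sum_list T (fun i => F i x)).
Proof.
  induction T as [|i T IH]; intro HF; simpl.
  - apply bounded_const.
  - apply bounded_add; [apply HF; simpl; auto | apply IH].
    intros j Hj; apply HF; simpl; auto.
Qed.

End Bounded.

Section Mean.
Context {X : Type}.
Variable m : (X -> R) -> R.
Hypothesis Hm : is_mean m.

Lemma mean_add (f h : X -> R) :
  bounded f -> bounded h -> m (fun x => f x + h x) = m f + m h.
Proof. destruct Hm as (H & _); auto. Qed.

Lemma mean_scale (c : R) (f : X -> R) : bounded f -> m (fun x => c * f x) = c * m f.
Proof. destruct Hm as (_ & H & _); auto. Qed.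

Lemma mean_const (c : R) : m (fun _ => c) = c.
Proof.
  destruct Hm as (_ & _ & _ & H1).
  replace (fun _ : X => c) with (fun _ : X => c * 1) by (extensionality x; ring).
  rewrite mean_scale, H1 by apply bounded_const; ring.
Qed.

Lemma mean_sub (f h : X -> R) :
  bounded f -> bounded h -> m (fun x => f x - h x) = m f - m h.
Proof.
  intros Hf Hh.
  assert (Hfh : bounded (fun x => f x - h x)).
  { replace (fun x => f x - h x) with (fun x => f x + (-1) * h x)
      by (extensionality x; ring).
    apply bounded_add; [exact Hf | apply bounded_scale, Hh]. }
  replace (m f) with (m (fun x => (f x - h x) + h x))
    by (f_equal; extensionality x; ring).
  rewrite mean_add by assumption; ring.
Qed.

Lemma mean_mono (f h : X -> R) :
  bounded f -> bounded h -> (forall x, f x <= h x) -> m f <= m h.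
Proof.
  intros Hf Hh Hle. destruct Hm as (_ & _ & Hpos & _).
  assert (0 <= m (fun x => h x - f x)).
  { apply Hpos; [ | intro x; specialize (Hle x); lra].
    replace (fun x => h x - f x) with (fun x => h x + (-1) * f x)
      by (extensionality x; ring).
    apply bounded_add; [exact Hh | apply bounded_scale, Hf]. }
  rewrite mean_sub in H by assumption; lra.
Qed.

Lemma mean_close (f h : X -> R) (d : R) :
  bounded f -> bounded h -> (forall x, Rabs (f x - h x) <= d) ->
  Rabs (m f - m h) <= d.
Proof.
  intros Hf Hh Hd.
  assert (Hb : bounded (fun x => f x - h x)).
  { exists d; exact Hd. }
  rewrite <- mean_sub by assumption.
  apply Rabs_le; split.
  - rewrite <- (mean_const (- d)).
    apply mean_mono; [apply bounded_const | exact Hb |].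
    intro x; specialize (Hd x); apply Rabs_le_between in Hd; lra.
  - rewrite <- (mean_const d).
    apply mean_mono; [exact Hb | apply bounded_const |].
    intro x; specialize (Hd x); apply Rabs_le_between in Hd; lra.
Qed.

Lemma mean_sum_list {I : Type} (T : list I) (F : I -> X -> R) :
  (forall i, In i T -> bounded (F i)) ->
  m (fun x => sum_list T (fun i => F i x)) = sum_list T (fun i => m (F i)).
Proof.
  induction T as [|i T IH]; intro HF; simpl.
  - apply mean_const.
  - rewrite mean_add, IH; auto.
    + intros; apply HF; simpl; auto.
    + apply HF; simpl; auto.
    + apply bounded_sum_list; intros; apply HF; simpl; auto.
Qed.

End Mean.

Section Staircase.
Context {X : Type}.

(* staircase d f n = sum_{k=1}^{n} d * 1_{f > k d}, a finite combination of
   indicators approximating a nonnegative f from below up to height n d. *)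
Fixpoint staircase (d : R) (f : X -> R) (n : nat) (x : X) : R :=
  match n with
  | O => 0
  | S k => staircase d f k x + d * indicator (fun y => INR (S k) * d < f y) x
  end.

Lemma bounded_staircase (d : R) (f : X -> R) (n : nat) : bounded (staircase d f n).
Proof.
  induction n as [|n IH]; simpl.
  - apply bounded_const.
  - apply bounded_add; [exact IH | apply bounded_scale, bounded_indicator].
Qed.

Lemma staircase_bounds (d : R) (f : X -> R) (n : nat) (x : X) :
  0 < d -> 0 <= f x ->
  staircase d f n x <= f x /\ staircase d f n x <= INR n * d /\
  Rmin (f x - d) (INR n * d) <= staircase d f n x.
Proof.
  intros Hd Hf. induction n as [|n IH].
  - simpl. rewrite Rmult_0_l. unfold Rmin; destruct Rle_dec; lra.
  - change (staircase d f (S n) x)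
      with (staircase d f n x + d * indicator (fun y => INR (S n) * d < f y) x).
    assert (HS : INR (S n) * d = INR n * d + d) by (rewrite S_INR; ring).
    unfold indicator; destruct excluded_middle_informative; rewrite HS in *;
    destruct IH as (I1 & I2 & I3); unfold Rmin in *; repeat destruct Rle_dec; lra.
Qed.

Lemma staircase_uniform_approx (f : X -> R) (B d : R) :
  0 < d -> (forall x, Rabs (f x) <= B) ->
  exists n, forall x,
    Rabs (f x - (staircase d (fun y => f y + B) n x - B)) <= d.
Proof.
  intros Hd HB.
  destruct (INR_archimed d (B + B) ltac:(lra)) as [n Hn].
  exists n; intro x.
  specialize (HB x); apply Rabs_le_between in HB.
  destruct (staircase_bounds d (fun y => f y + B) n x Hd ltac:(simpl; lra))
    as (I1 & _ & I3).
  simpl in *. unfold Rmin in I3; destruct Rle_dec; apply Rabs_le; lra.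
Qed.

End Staircase.

Definition ratio {G X : Type} (inv : G -> G) (act : G -> X -> X) (w : X -> R)
  (g : G) (x : X) : R :=
  w (act (inv g) x) / w x.

Definition transfers {G X : Type} (inv : G -> G) (act : G -> X -> X) (w : X -> R)
  (m : (X -> R) -> R) (g : G) (f : X -> R) : Prop :=
  m (fun x => f (act g x)) = m (fun x => f x * ratio inv act w g x).

Section Action.
Context {G X : Type}.
Variables (mul : G -> G -> G) (inv : G -> G) (e : G) (act : G -> X -> X).
Hypothesis HG : is_group mul inv e.
Hypothesis Hact : is_action mul e act.

Lemma act_inv_l (g : G) (y : X) : act (inv g) (act g y) = y.
Proof.
  destruct HG as (_ & _ & _ & Hl & _); destruct Hact as (H1 & H2).
  rewrite <- H2, Hl, H1; reflexivity.
Qed.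

Lemma act_inv_r (g : G) (y : X) : act g (act (inv g) y) = y.
Proof.
  destruct HG as (_ & _ & _ & _ & Hr); destruct Hact as (H1 & H2).
  rewrite <- H2, Hr, H1; reflexivity.
Qed.

Lemma indicator_pullback (g : G) (A : X -> Prop) :
  (fun x => indicator A (act g x)) = indicator (image_set act (inv g) A).
Proof.
  extensionality y; unfold indicator, image_set.
  destruct (excluded_middle_informative (A (act g y))) as [HA|HA];
  destruct (excluded_middle_informative (exists x, A x /\ y = act (inv g) x))
    as [[x [Hx ->]]|Hno]; auto.
  - exfalso; apply Hno; exists (act g y); split; [exact HA | now rewrite act_inv_l].
  - exfalso; apply HA; now rewrite act_inv_r.
Qed.

End Action.

Section Transfer.
Context {G X : Type}.
Variables (mul : G -> G -> G) (inv : G -> G) (e : G) (act : G -> X -> X)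
  (w : X -> R) (m : (X -> R) -> R).
Hypothesis HG : is_group mul inv e.
Hypothesis Hact : is_action mul e act.
Hypothesis Hbal : balanced act w.
Hypothesis Hm : is_mean m.
Hypothesis Hinv : w_invariant act w m.

Notation rho := (ratio inv act w).
Notation transfers := (transfers inv act w m).
Let rho_bounded (g : G) : bounded (rho g) := Hbal (inv g).

Lemma transfers_indicator (g : G) (A : X -> Prop) : transfers g (indicator A).
Proof.
  unfold transfers; rewrite (indicator_pullback mul inv e act HG Hact); apply Hinv.
Qed.

Lemma mean_ratio (g : G) : m (rho g) = 1.
Proof.
  assert (Hfull : indicator (fun _ : X => True) = (fun _ => 1)).
  { extensionality x; unfold indicator.
    destruct excluded_middle_informative as [|Hn]; [reflexivity | now exfalso; apply Hn]. }
  pose proof (transfers_indicator g (fun _ => True)) as Hmass.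
  unfold transfers in Hmass; rewrite Hfull, (mean_const m Hm) in Hmass.
  rewrite Hmass; f_equal; extensionality x; ring.
Qed.

Lemma transfers_const (g : G) (c : R) : transfers g (fun _ => c).
Proof.
  unfold transfers.
  rewrite (mean_const m Hm), (mean_scale m Hm), mean_ratio by apply rho_bounded.
  ring.
Qed.

Lemma transfers_add (g : G) (f h : X -> R) :
  bounded f -> bounded h -> transfers g f -> transfers g h ->
  transfers g (fun x => f x + h x).
Proof.
  intros Hf Hh Tf Th; unfold transfers in *.
  replace (fun x => (f x + h x) * rho g x)
    with (fun x => f x * rho g x + h x * rho g x) by (extensionality x; ring).
  rewrite !(mean_add m Hm), Tf, Th; try reflexivity;
    try (apply bounded_comp; assumption);
    apply bounded_mul; auto; apply rho_bounded.
Qed.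

Lemma transfers_scale (g : G) (c : R) (f : X -> R) :
  bounded f -> transfers g f -> transfers g (fun x => c * f x).
Proof.
  intros Hf Tf; unfold transfers in *.
  replace (fun x => c * f x * rho g x)
    with (fun x => c * (f x * rho g x)) by (extensionality x; ring).
  rewrite !(mean_scale m Hm), Tf; try reflexivity.
  - apply bounded_mul; [exact Hf | apply rho_bounded].
  - apply bounded_comp, Hf.
Qed.

Lemma transfers_staircase (g : G) (d : R) (f : X -> R) (n : nat) :
  transfers g (staircase d f n).
Proof.
  induction n as [|n IH]; simpl.
  - apply transfers_const.
  - apply transfers_add; auto using bounded_staircase, bounded_scale, bounded_indicator.
    apply transfers_scale; [apply bounded_indicator | apply transfers_indicator].
Qed.

(* Transfer passes to uniform limits, since m is 1-Lipschitz and rho_g is bounded. *)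
Lemma transfers_uniform_limit (g : G) (f : X -> R) :
  bounded f ->
  (forall d, 0 < d -> exists s, bounded s /\ transfers g s /\
                                forall x, Rabs (f x - s x) <= d) ->
  transfers g f.
Proof.
  intros Hf Happrox.
  destruct (rho_bounded g) as [K HK].
  unfold transfers.
  apply Rminus_diag_uniq, (Rabs_eq0_of_small _ (1 + Rabs K));
    [pose proof (Rabs_pos K); lra |].
  intros d Hd.
  destruct (Happrox d Hd) as (s & Hs & Ts & Hfs).
  assert (Hcomp : Rabs (m (fun x => f (act g x)) - m (fun x => s (act g x))) <= d).
  { apply (mean_close m Hm); auto using bounded_comp. }
  assert (Hweight : Rabs (m (fun x => f x * rho g x) - m (fun x => s x * rho g x))
                    <= d * Rabs K).
  { apply (mean_close m Hm); try (apply bounded_mul; auto using rho_bounded).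
    intro x. rewrite <- Rmult_minus_distr_r, Rabs_mult.
    apply Rmult_le_compat; auto using Rabs_pos.
    eapply Rle_trans; [apply HK | apply RRle_abs]. }
  unfold transfers in Ts; rewrite Ts in Hcomp.
  apply Rabs_le_between in Hcomp; apply Rabs_le_between in Hweight.
  apply Rabs_le; lra.
Qed.

Lemma transfers_bounded (g : G) (f : X -> R) : bounded f -> transfers g f.
Proof.
  intros Hf. apply transfers_uniform_limit; [exact Hf |].
  destruct Hf as [B HB]; intros d Hd.
  destruct (staircase_uniform_approx f B d Hd HB) as [n Hn].
  exists (fun x => staircase d (fun y => f y + B) n x - B); repeat split.
  - apply bounded_add; [apply bounded_staircase | apply bounded_const].
  - apply transfers_add;
      auto using bounded_staircase, bounded_const, transfers_staircase, transfers_const.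
  - exact Hn.
Qed.

End Transfer.

Section Compression.
Context {G X : Type}.
Variables (mul : G -> G -> G) (inv : G -> G) (e : G) (act : G -> X -> X)
  (w : X -> R) (m : (X -> R) -> R).
Hypothesis HG : is_group mul inv e.
Hypothesis Hact : is_action mul e act.
Hypothesis Hbal : balanced act w.
Hypothesis Hm : is_mean m.

Lemma mean_translate_weighted (g : G) (Psi : X -> R) :
  (forall f, bounded f -> transfers inv act w m g f) -> bounded Psi ->
  m Psi = m (fun x => Psi (act (inv g) x) * ratio inv act w g x).
Proof.
  intros Htr HPsi.
  rewrite <- (Htr (fun y => Psi (act (inv g) y))) by (apply bounded_comp, HPsi).
  f_equal; extensionality x; now rewrite (act_inv_l mul inv e act HG Hact).
Qed.

(* A compression system is incompatible with a mean satisfying the transfer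
   identity: the total mass 1 would be at most 1/2. *)
Lemma compression_contradiction (T : list G) (Psi : G -> X -> R) :
  (forall g f, bounded f -> transfers inv act w m g f) ->
  compression_system inv act w T Psi -> False.
Proof.
  intros Htr (_ & HPsi & Hsum).
  set (h := fun g x => Psi g (act (inv g) x) * ratio inv act w g x).
  assert (HbPsi : forall g, In g T -> bounded (Psi g)) by (intros g Hg; apply HPsi, Hg).
  assert (Hbh : forall g, In g T -> bounded (h g)).
  { intros g Hg; unfold h.
    apply bounded_mul; [apply bounded_comp, HbPsi, Hg | exact (Hbal (inv g))]. }
  assert (Hmass : 1 = m (fun x => sum_list T (fun g => h g x))).
  { rewrite <- (mean_const m Hm 1).
    replace (fun _ : X => 1) with (fun x => sum_list T (fun g => Psi g x))
      by (extensionality x; apply Hsum).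
    rewrite !(mean_sum_list m Hm) by assumption.
    apply sum_list_ext; intros g Hg.
    apply mean_translate_weighted; [apply Htr | apply HbPsi, Hg]. }
  assert (Hhalf : m (fun x => sum_list T (fun g => h g x)) <= 1 / 2).
  { rewrite <- (mean_const m Hm (1 / 2)).
    apply (mean_mono m Hm); [apply bounded_sum_list, Hbh | apply bounded_const |].
    intro x; apply Rlt_le, Hsum. }
  lra.
Qed.

End Compression.

Theorem proposition2p2
  (G X : Type) (mul : G -> G -> G) (inv : G -> G) (e : G) (act : G -> X -> X)
  (w : X -> R)
  (HG : is_group mul inv e) (Hfg : finitely_generated mul inv e)
  (Hact : is_action mul e act) (HX : countable_type X)
  (Hwpos : forall x, 0 < w x) (Hbal : balanced act w)
  (Hcomp : has_compression_system inv act w) :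
  ~ (exists m : (X -> R) -> R, is_mean m /\ w_invariant act w m).
Proof.
  intros (m & Hm & Hinv).
  destruct Hcomp as (T & Psi & Hsys).
  apply (compression_contradiction mul inv e act w m HG Hact Hbal Hm T Psi); [| exact Hsys].
  intros g f Hf.
  exact (transfers_bounded mul inv e act w m HG Hact Hbal Hm Hinv g f Hf).
Qed.
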